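(* Let $f:[0,\infty)\to\mathbb R$ be convex and non-increasing, and let $g:[0,\infty)\to\mathbb R\cup\{+\infty\}$ be convex and non-increasing. Define $w(x,y)=g\big(\sqrt{(x-y)^2+(f(x)-f(y))^2}\big)$ for $x,y\ge0$. Then for all $0\le x_1\le x_2\le x_3\le x_4$, $w(x_1,x_3)+w(x_2,x_4)=\min\{w(x_{\sigma(1)},x_{\sigma(2)})+w(x_{\sigma(3)},x_{\sigma(4)}):\sigma\text{ a permutation of }\{1,2,3,4\}\},$ i.e. $w$ is well-ordering on $[0,\infty)$.
   Context: Well-ordering on a set $J\subset\mathbb R$ means exactly the displayed identity for all $x_1\le x_2\le x_3\le x_4$ in $J$ (for a symmetric continuous interaction). *)

From HB Require Import structures.
From mathcomp Require Import all_boot all_order all_algebra all_fingroup.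
From mathcomp Require Import all_classical all_reals ereal.
Set Implicit Arguments. Unset Strict Implicit. Unset Printing Implicit Defensive.
Import Order.TTheory GRing.Theory Num.Theory.
Local Open Scope ring_scope.
Local Open Scope ereal_scope.

Definition convex_on_nonneg {R : realType} (f : R -> R) : Prop :=
  forall (x y t : R), (0 <= x)%R -> (0 <= y)%R -> (0 < t < 1)%R ->
    (f (t * x + (1 - t) * y) <= t * f x + (1 - t) * f y)%R.

Definition nonincreasing_on_nonneg {R : realType} (f : R -> R) : Prop :=
  forall (x y : R), (0 <= x)%R -> (x <= y)%R -> (f y <= f x)%R.

(* g : [0,oo) -> R u {+oo} convex, with the usual convention of extended
   arithmetic (no -oo values are involved). *)
Definition econvex_on_nonneg {R : realType} (g : R -> \bar R) : Prop :=
  forall (x y t : R), (0 <= x)%R -> (0 <= y)%R -> (0 < t < 1)%R ->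
    g (t * x + (1 - t) * y)%R <= t%:E * g x + (1 - t)%:E * g y.

Definition enonincreasing_on_nonneg {R : realType} (g : R -> \bar R) : Prop :=
  forall (x y : R), (0 <= x)%R -> (x <= y)%R -> g y <= g x.

Definition wfg {R : realType} (f : R -> R) (g : R -> \bar R) (x y : R) : \bar R :=
  g (Num.sqrt ((x - y) ^+ 2 + (f x - f y) ^+ 2))%R.

(* the point x_{i+1}, for i : 'I_4 (0-based indexing of x_1..x_4) *)
Definition pt4 {R : realType} (x1 x2 x3 x4 : R) (i : 'I_4) : R :=
  nth 0%R [:: x1; x2; x3; x4] i.

Definition min_pairing {R : realType} (w : R -> R -> \bar R) (x1 x2 x3 x4 : R)
  : \bar R :=
  \big[Order.min/+oo]_(s : 'S_4)
    (w (pt4 x1 x2 x3 x4 (s (inord 0))) (pt4 x1 x2 x3 x4 (s (inord 1)))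
     + w (pt4 x1 x2 x3 x4 (s (inord 2))) (pt4 x1 x2 x3 x4 (s (inord 3)))).

From HB Require Import structures.
From mathcomp Require Import all_boot all_order all_algebra all_fingroup.
From mathcomp Require Import all_classical all_reals ereal.
From mathcomp Require Import lra ring.
Set Implicit Arguments. Unset Strict Implicit. Unset Printing Implicit Defensive.
Import Order.TTheory GRing.Theory Num.Theory.
Local Open Scope ring_scope.

(* Write P x = (x, f x) and d x y = |P x - P y|.  Since f is convex, the chords
   P x1 P x3 and P x2 P x4 cross, and the triangle inequality through the crossing
   point gives d x1 x4 + d x2 x3 <= d x1 x3 + d x2 x4.  Since f is nonincreasing,
   d x y grows when the interval [x, y] grows, so d x2 x3 is the smallest and
   d x1 x4 the largest of the four distances in that inequality; for g convex and
   nonincreasing this majorization yields g(d13) + g(d24) <= g(d14) + g(d23), and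
   monotonicity of g alone gives g(d13) + g(d24) <= g(d12) + g(d34).  By symmetry
   of w every permutation produces one of these three pairings. *)

Section PlaneDistance.
Variable R : rcfType.
Implicit Types (a b c d k t : R) (p q r : R * R).

Definition plane_dist p q : R := Num.sqrt ((p.1 - q.1) ^+ 2 + (p.2 - q.2) ^+ 2).

Definition segment_point p q t : R * R :=
  (p.1 + t * (q.1 - p.1), p.2 + t * (q.2 - p.2)).

Lemma plane_dist_ge0 p q : 0 <= plane_dist p q.
Proof. exact: sqrtr_ge0. Qed.

Lemma plane_distC p q : plane_dist p q = plane_dist q p.
Proof. by rewrite /plane_dist -[p.1 - _]opprB -[p.2 - _]opprB !sqrrN. Qed.

Lemma cauchy_schwarz2 a b c d :
  a * c + b * d <= Num.sqrt (a ^+ 2 + b ^+ 2) * Num.sqrt (c ^+ 2 + d ^+ 2).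
Proof.
rewrite -sqrtrM ?addr_ge0 ?sqr_ge0 //.
apply: le_trans (ler_norm _) _; rewrite -sqrtr_sqr ler_wsqrtr // -subr_ge0.
by rewrite (_ : _ - _ = (a * d - b * c) ^+ 2) ?sqr_ge0 //; ring.
Qed.

Lemma plane_dist_triangle p q r : plane_dist p r <= plane_dist p q + plane_dist q r.
Proof.
have cs := cauchy_schwarz2 (p.1 - q.1) (p.2 - q.2) (q.1 - r.1) (q.2 - r.2).
rewrite -[plane_dist p q + _]ger0_norm ?addr_ge0 ?plane_dist_ge0 // -sqrtr_sqr.
rewrite {1}/plane_dist; apply: ler_wsqrtr.
rewrite /plane_dist [X in _ <= X]sqrrD !sqr_sqrtr ?addr_ge0 ?sqr_ge0 //; lra.
Qed.

Lemma sqrt_sum_sqrZ k a b :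
  Num.sqrt ((k * a) ^+ 2 + (k * b) ^+ 2) = `|k| * Num.sqrt (a ^+ 2 + b ^+ 2).
Proof. by rewrite !exprMn -mulrDr sqrtrM ?sqr_ge0 // sqrtr_sqr. Qed.

Lemma plane_dist_segment p q t : 0 <= t <= 1 ->
  plane_dist p (segment_point p q t) + plane_dist (segment_point p q t) q
  = plane_dist p q.
Proof.
case/andP=> t_ge0 t_le1; rewrite /plane_dist /=.
have d1 : p.1 - (p.1 + t * (q.1 - p.1)) = t * (p.1 - q.1) by ring.
have d2 : p.2 - (p.2 + t * (q.2 - p.2)) = t * (p.2 - q.2) by ring.
have e1 : p.1 + t * (q.1 - p.1) - q.1 = (1 - t) * (p.1 - q.1) by ring.
have e2 : p.2 + t * (q.2 - p.2) - q.2 = (1 - t) * (p.2 - q.2) by ring.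
by rewrite d1 d2 e1 e2 !sqrt_sum_sqrZ !ger0_norm ?subr_ge0 // -mulrDl addrC subrK mul1r.
Qed.

End PlaneDistance.

Lemma affine_root (R : realFieldType) (a b u v : R) : u <= v ->
  0 <= a + b * u -> a + b * v <= 0 -> exists2 x, u <= x <= v & a + b * x = 0.
Proof.
move=> le_uv hu hv; have [root_u|] := eqVneq (a + b * u) 0.
  by exists u; rewrite ?lexx ?le_uv.
rewrite eq_sym => nz_u; have {nz_u}hu : 0 < a + b * u by rewrite lt_neqAle nz_u.
have b_lt0 : b < 0 by nra.
have bx : b * (- a / b) = - a by rewrite mulrC divfK ?ltr0_neq0.
by exists (- a / b); [apply/andP; split; nra | rewrite bx subrr].
Qed.

Section ConvexGraph.
Variables (R : realType) (f : R -> R).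

Definition chord (a c x : R) : R := f a + (x - a) / (c - a) * (f c - f a).

Definition graph_dist (x y : R) : R := plane_dist (x, f x) (y, f y).

Lemma chord_left a c : chord a c a = f a.
Proof. by rewrite /chord subrr !mul0r addr0. Qed.

(* Also for [c = a], where the slope is [0 / 0 = 0]. *)
Lemma chord_right a c : chord a c c = f c.
Proof.
have [->|ca] := eqVneq c a; first exact: chord_left.
by rewrite /chord divff ?subr_eq0 // mul1r addrC subrK.
Qed.

Lemma chordE a c x : chord a c x = chord a c 0 + (f c - f a) / (c - a) * x.
Proof. by rewrite /chord; ring. Qed.

Lemma graph_distC x y : graph_dist x y = graph_dist y x.
Proof. exact: plane_distC. Qed.

Lemma plane_dist_chord_split a c x : a <= x <= c ->
  plane_dist (a, f a) (x, chord a c x) + plane_dist (x, chord a c x) (c, f c)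
  = graph_dist a c.
Proof.
case/andP=> le_ax le_xc; set t := (x - a) / (c - a).
have t01 : 0 <= t <= 1.
  have [ca|ca] := eqVneq c a; first by rewrite /t ca subrr invr0 mulr0 lexx ler01.
  have lt_ac : a < c by rewrite lt_neqAle eq_sym ca (le_trans le_ax).
  by apply/andP; split; [apply: divr_ge0 | rewrite ler_pdivrMr]; lra.
have -> : (x, chord a c x) = segment_point (a, f a) (c, f c) t.
  congr pair => /=; have [ca|ca] := eqVneq c a.
  - by rewrite /t ca subrr mulr0 addr0; apply/eqP; rewrite eq_le -{1}ca le_xc le_ax.
  - by rewrite /t divfK ?subrKC // subr_eq0.
exact: plane_dist_segment t01.
Qed.

Hypothesis f_convex : convex_on_nonneg f.

Lemma le_chord a b c : 0 <= a -> a <= b -> b <= c -> f b <= chord a c b.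
Proof.
move=> a_ge0 le_ab le_bc.
have [->|nab] := eqVneq b a; first by rewrite chord_left.
have [->|nbc] := eqVneq b c; first by rewrite chord_right.
have lt_ab : a < b by rewrite lt_neqAle eq_sym nab.
have lt_bc : b < c by rewrite lt_neqAle nbc.
have lt_ac := lt_trans lt_ab lt_bc.
have ca : c - a != 0 by rewrite subr_eq0 gt_eqF.
have t01 : 0 < (b - a) / (c - a) < 1.
  by rewrite divr_gt0 ?subr_gt0 // ltr_pdivrMr ?subr_gt0 // mul1r ltrD2r.
have := f_convex (le_trans a_ge0 (ltW lt_ac)) a_ge0 t01.
have -> : (b - a) / (c - a) * c + (1 - (b - a) / (c - a)) * a = b by field.
by rewrite /chord; congr (_ <= _); field.
Qed.

Lemma chords_cross x1 x2 x3 x4 : 0 <= x1 -> x1 <= x2 -> x2 <= x3 -> x3 <= x4 ->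
  exists2 x, x2 <= x <= x3 & chord x1 x3 x = chord x2 x4 x.
Proof.
move=> h1 h12 h23 h34.
have h2 := le_trans h1 h12.
pose a := chord x1 x3 0 - chord x2 x4 0.
pose b := (f x3 - f x1) / (x3 - x1) - (f x4 - f x2) / (x4 - x2).
have at_x2 : 0 <= a + b * x2.
  have := le_chord h1 h12 h23; have := chord_left x2 x4.
  by rewrite (chordE x1 x3 x2) (chordE x2 x4 x2) /a /b; lra.
have at_x3 : a + b * x3 <= 0.
  have := le_chord h2 h23 h34; have := chord_right x1 x3.
  by rewrite (chordE x1 x3 x3) (chordE x2 x4 x3) /a /b; lra.
have [x x23 root] := affine_root h23 at_x2 at_x3.
by exists x => //; rewrite (chordE x1 x3 x) (chordE x2 x4 x); move: root; rewrite /a /b; lra.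
Qed.

(* Both chords pass through their crossing point, so the triangle inequality applies twice. *)
Lemma graph_dist_quadrangle x1 x2 x3 x4 :
  0 <= x1 -> x1 <= x2 -> x2 <= x3 -> x3 <= x4 ->
  graph_dist x1 x4 + graph_dist x2 x3 <= graph_dist x1 x3 + graph_dist x2 x4.
Proof.
move=> h1 h12 h23 h34.
have [x /andP[le_x2x le_xx3] cross] := chords_cross h1 h12 h23 h34.
have x13 : x1 <= x <= x3 by rewrite le_xx3 (le_trans h12).
have x24 : x2 <= x <= x4 by rewrite le_x2x (le_trans le_xx3).
rewrite -(plane_dist_chord_split x13) -(plane_dist_chord_split x24) -cross.
set Q := (x, chord x1 x3 x).
have t14 := plane_dist_triangle (x1, f x1) Q (x4, f x4).
have t23 := plane_dist_triangle (x2, f x2) Q (x3, f x3).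
rewrite /graph_dist; lra.
Qed.

End ConvexGraph.

Section NonincreasingGraph.
Variables (R : realType) (f : R -> R).
Hypothesis f_nonincr : nonincreasing_on_nonneg f.

Lemma graph_dist_le_right x y z : 0 <= x -> x <= y -> y <= z ->
  graph_dist f x y <= graph_dist f x z.
Proof.
move=> x_ge0 le_xy le_yz; apply: ler_wsqrtr => /=.
have := f_nonincr x_ge0 le_xy; have := f_nonincr (le_trans x_ge0 le_xy) le_yz; nra.
Qed.

Lemma graph_dist_le_left x y z : 0 <= x -> x <= y -> y <= z ->
  graph_dist f y z <= graph_dist f x z.
Proof.
move=> x_ge0 le_xy le_yz; apply: ler_wsqrtr => /=.
have := f_nonincr x_ge0 le_xy; have := f_nonincr (le_trans x_ge0 le_xy) le_yz; nra.
Qed.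

End NonincreasingGraph.

Local Open Scope ereal_scope.

Lemma convex_comb_addE (R : realDomainType) (t : R) (x y : \bar R) : (0 <= t <= 1)%R ->
  t%:E * x + (1 - t)%:E * y + ((1 - t)%:E * x + t%:E * y) = x + y.
Proof.
case/andP=> t_ge0 t_le1.
rewrite addeACA [(1 - t)%:E * y + _]addeC.
by rewrite -!ge0_muleDl ?lee_fin ?subr_ge0 // -EFinD subrKC !mul1e.
Qed.

Section ConvexExtendedValued.
Variables (R : realType) (g : R -> \bar R).
Hypothesis g_convex : econvex_on_nonneg g.

Lemma econvex_add_le a b d : (0 <= a)%R -> (a <= b)%R -> (b <= d)%R ->
  g b + g (a + d - b)%R <= g a + g d.
Proof.
move=> a_ge0 le_ab le_bd.
have [->|nba] := eqVneq b a.
  by rewrite (_ : a + d - a = d)%R //; ring.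
have [->|nbd] := eqVneq b d.
  by rewrite (_ : a + d - d = a)%R 1?addeC //; ring.
have lt_ab : (a < b)%R by rewrite lt_neqAle eq_sym nba.
have lt_bd : (b < d)%R by rewrite lt_neqAle nbd.
have da : (d - a != 0)%R by rewrite subr_eq0 gt_eqF ?(lt_trans lt_ab).
pose t := ((d - b) / (d - a))%R.
have t01 : (0 < t < 1)%R.
  by apply/andP; split; [apply: divr_gt0 | rewrite ltr_pdivrMr]; lra.
have t'01 : (0 < 1 - t < 1)%R.
  by case/andP: t01 => ? ?; apply/andP; split; lra.
have d_ge0 : (0 <= d)%R by rewrite (le_trans a_ge0) ?(le_trans le_ab).
have gb := g_convex a_ge0 d_ge0 t01.
have gc := g_convex a_ge0 d_ge0 t'01.
have -> : b = (t * a + (1 - t) * d)%R by rewrite /t; field.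
have -> : (a + d - (t * a + (1 - t) * d))%R = ((1 - t) * a + (1 - (1 - t)) * d)%R by ring.
rewrite subKr in gc *.
have t01w : (0 <= t <= 1)%R by case/andP: t01 => ? ?; apply/andP; split; lra.
by rewrite -(convex_comb_addE (g a) (g d) t01w) leeD.
Qed.

End ConvexExtendedValued.

Lemma econvex_nonincr_add_le (R : realType) (g : R -> \bar R) (a b c d : R) :
  econvex_on_nonneg g -> enonincreasing_on_nonneg g ->
  (0 <= a)%R -> (a <= b)%R -> (b <= d)%R -> (a + d <= b + c)%R ->
  g b + g c <= g a + g d.
Proof.
move=> g_convex g_nonincr a_ge0 le_ab le_bd le_c.
apply: le_trans (econvex_add_le g_convex a_ge0 le_ab le_bd).
apply: leeD => //; apply: g_nonincr; lra.
Qed.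

Lemma le_pairing_distinct (R : realDomainType) (W : nat -> nat -> \bar R) (V : \bar R) :
  (forall i j, W i j = W j i) ->
  V <= W 0%N 1%N + W 2%N 3%N -> V <= W 0%N 2%N + W 1%N 3%N ->
  V <= W 0%N 3%N + W 1%N 2%N ->
  forall i j k l : nat, (i < 4)%N -> (j < 4)%N -> (k < 4)%N -> (l < 4)%N ->
  i != j -> i != k -> i != l -> j != k -> j != l -> k != l ->
  V <= W i j + W k l.
Proof.
move=> WC le01 le02 le03 i j k l.
case: i => [|[|[|[|i]]]] //; case: j => [|[|[|[|j]]]] //;
case: k => [|[|[|[|k]]]] //; case: l => [|[|[|[|l]]]] // => _ _ _ _ *;
by rewrite ?[W 1%N 0%N]WC ?[W 2%N 0%N]WC ?[W 3%N 0%N]WC ?[W 2%N 1%N]WC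
   ?[W 3%N 1%N]WC ?[W 3%N 2%N]WC ?[W _ _ + W 0%N _]addeC.
Qed.

Lemma min_pairingE (R : realType) (w : R -> R -> \bar R) (x1 x2 x3 x4 : R) :
  (forall x y, w x y = w y x) ->
  w x1 x3 + w x2 x4 <= w x1 x2 + w x3 x4 ->
  w x1 x3 + w x2 x4 <= w x1 x4 + w x2 x3 ->
  w x1 x3 + w x2 x4 = min_pairing w x1 x2 x3 x4.
Proof.
move=> wC le12 le14; have inord_eq k l : (k < 4)%N -> (l < 4)%N ->
    (inord k == inord l :> 'I_4) = (k == l).
  by move=> hk hl; rewrite -(inj_eq val_inj) /= !inordK.
apply/le_anti/andP; split; last first.
  apply: le_trans (bigmin_le _ (tperm (inord 1) (inord 2)) _) _.
  by rewrite !permE /= /pt4 !inord_eq //= !inordK.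
apply/bigmin_geP; split=> [|s _]; first exact: leey.
have s_neq k l : (k < 4)%N -> (l < 4)%N -> k != l -> s (inord k) != s (inord l) :> nat.
  by move=> hk hl hkl; rewrite (inj_eq val_inj) (inj_eq perm_inj) inord_eq.
pose W i j := w (nth 0%R [:: x1; x2; x3; x4] i) (nth 0%R [:: x1; x2; x3; x4] j).
apply: (@le_pairing_distinct _ W) => //; try exact: ltn_ord; try exact: s_neq.
by move=> i j; rewrite /W wC.
Qed.

Theorem mainTheorem19 (R : realType) (f : R -> R) (g : R -> \bar R) :
  (forall x : R, (0 <= x)%R -> g x != -oo) ->
  convex_on_nonneg f -> nonincreasing_on_nonneg f ->
  econvex_on_nonneg g -> enonincreasing_on_nonneg g ->
  forall x1 x2 x3 x4 : R,
    (0 <= x1)%R -> (x1 <= x2)%R -> (x2 <= x3)%R -> (x3 <= x4)%R ->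
    wfg f g x1 x3 + wfg f g x2 x4 = min_pairing (wfg f g) x1 x2 x3 x4.
Proof.
move=> _ f_convex f_nonincr g_convex g_nonincr x1 x2 x3 x4 h1 h12 h23 h34.
have h2 := le_trans h1 h12; have h13 := le_trans h12 h23.
have wfgE x y : wfg f g x y = g (graph_dist f x y) by [].
apply: min_pairingE => [x y||]; rewrite !wfgE.
- by rewrite graph_distC.
- apply: leeD; apply: g_nonincr; rewrite ?plane_dist_ge0 //.
  + exact: (graph_dist_le_right f_nonincr h1 h12 h23).
  + exact: (graph_dist_le_left f_nonincr h2 h23 h34).
- rewrite (addeC (g (graph_dist f x1 x4))); apply: econvex_nonincr_add_le => //.
  + exact: plane_dist_ge0.
  + exact: (graph_dist_le_left f_nonincr h1 h12 h23).
  + exact: (graph_dist_le_right f_nonincr h1 h13 h34).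
  + have := graph_dist_quadrangle f_convex h1 h12 h23 h34; lra.
Qed.
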